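(* Let $\{x_k\}$ be generated by the Subgradient-InexP method with Polyak's stepsize rule, under the standing assumptions (in particular $\Omega^*\neq\varnothing$). Then $\{x_k\}$ converges to a point $x_*\in\Omega^*$.
   Context: Problem: minimize a convex $f:\mathbb{R}^n\to\mathbb{R}$ over a nonempty closed convex $C\subset\mathbb{R}^n$; $f^*:=\inf_{x\in C}f(x)$, $\Omega^*$ the set of minimizers. For $\epsilon\ge0$, $\partial_\epsilon f(x):=\{s: f(y)\ge f(x)+\langle s,y-x\rangle-\epsilon\ \forall y\}$. Relative error tolerance function: any $\varphi_{\gamma,\theta,\lambda}:(\mathbb{R}^n)^3\to[0,\infty)$ with $\varphi_{\gamma,\theta,\lambda}(u,v,w)\le\gamma\|v-u\|^2+\theta\|w-v\|^2+\lambda\|w-u\|^2$; for $u\in C$, $\mathcal{P}_C(\varphi_{\gamma,\theta,\lambda},u,v):=\{w\in C:\langle v-w,z-w\rangle\le\varphi_{\gamma,\theta,\lambda}(u,v,w)\ \forall z\in C\}$. Subgradient-InexP method: $x_0\in C$; at iteration $k$, if $0\in\partial f(x_k)$ stop; otherwise choose nonzero $s_k\in\partial_{\epsilon_k}f(x_k)$, stepsize $t_k>0$, and $x_{k+1}\in\mathcal{P}_C(\varphi_{\gamma_k,\theta_k,\lambda_k},x_k,x_k-t_ks_k)$. Standing assumptions: $\gamma_k\in[0,\bar\gamma)$, $\theta_k\in[0,\bar\theta)$, $\lambda_k\in[0,\bar\lambda)$ with $\bar\gamma\ge0$, $\bar\theta,\bar\lambda\in[0,1/2)$; the sequence is infinite.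 Let $\nu:=\frac{1+2\bar\gamma}{1-2\bar\lambda}$. Polyak's stepsize rule: $\Omega^*\neq\varnothing$, $f^*>-\infty$ known; $\mu\ge0$, $\underline\beta>0$, $\bar\beta>0$; $\{\epsilon_k\}$ nonincreasing, $0<\underline\beta\le\beta_k\le\bar\beta<\frac{1}{2\mu+\nu}$ and $0<\epsilon_k\le\mu\beta_k[f(x_k)-f^*]$ for all $k$; $t_k:=\beta_k\frac{f(x_k)-f^*}{\|s_k\|^2}$. *)

From HB Require Import structures.
From mathcomp Require Import all_boot all_order all_algebra.
From mathcomp Require Import all_classical all_reals all_analysis.
Set Implicit Arguments. Unset Strict Implicit. Unset Printing Implicit Defensive.
Import Order.TTheory GRing.Theory Num.Theory.
Import numFieldNormedType.Exports.
Local Open Scope classical_set_scope.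
Local Open Scope ring_scope.

Section Defs.
Variables (R : realType) (n : nat).
Local Notation V := 'rV[R]_n.

Definition dotv (u v : V) : R := \sum_(i < n) u ord0 i * v ord0 i.
Definition normv (u : V) : R := Num.sqrt (dotv u u).

Definition convex_funV (f : V -> R) : Prop :=
  forall (x y : V) (t : R), 0 <= t -> t <= 1 ->
    f (t *: x + (1 - t) *: y) <= t * f x + (1 - t) * f y.

Definition convex_setV (C : set V) : Prop :=
  forall (x y : V) (t : R), C x -> C y -> 0 <= t -> t <= 1 ->
    C (t *: x + (1 - t) *: y).

Definition eps_subdiff (f : V -> R) (eps : R) (x : V) : set V :=
  [set s | forall y : V, f y >= f x + dotv s (y - x) - eps].

Definition rel_err_tol (g th l : R) (phi : V -> V -> V -> R) : Prop :=
  forall u v w : V, 0 <= phi u v w /\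
    phi u v w <= g * normv (v - u) ^+ 2 + th * normv (w - v) ^+ 2
                 + l * normv (w - u) ^+ 2.

Definition inexP (C : set V) (phi : V -> V -> V -> R) (u v : V) : set V :=
  [set w | C w /\ forall z : V, C z -> dotv (v - w) (z - w) <= phi u v w].

End Defs.

From HB Require Import structures.
From mathcomp Require Import all_boot all_order all_algebra.
From mathcomp Require Import all_classical all_reals all_analysis.
From mathcomp Require Import ring lra.
Import Order.TTheory GRing.Theory Num.Theory.
Import numFieldNormedType.Exports.
Local Open Scope classical_set_scope.
Local Open Scope ring_scope.

(* Let [D k = f (x k) - fstar].  The proof has three parts.
   1. Fejer inequality.  For every minimizer [z] and every [k],
        |x (k+1) - z|^2 <= |x k - z|^2 - t k * D k.
      It combines an estimate for the inexact projection step
      ([inexact_proj_fejer]) with one for the eps-subgradient step with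
      Polyak's stepsize ([polyak_subgrad_step]); the parameter bounds
      ([polyak_admissible]) make the projection error affordable.
   2. Vanishing gap.  Telescoping bounds the partial sums of [t k * D k].  The
      iterates stay in a ball, on which the convex [f] is bounded above
      ([convex_bounded_on_ball]); hence the eps-subgradients are bounded
      ([eps_subdiff_normv_le]), so [D k ^ 2 <= const * t k * D k] and [D k -> 0].
   3. Convergence.  A Fejer monotone sequence with [f (x k) -> fstar] has a
      cluster point (Bolzano-Weierstrass), which is a minimizer by lower
      semicontinuity of convex functions, and then the whole sequence
      converges to it ([fejer_gap_cvg]). *)

Set Implicit Arguments. Unset Strict Implicit.

Section Euclid.
Variables (R : realType) (n : nat).
Local Notation V := 'rV[R]_n.
Implicit Types u v w : V.

Lemma dotvC u v : dotv u v = dotv v u.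
Proof. by apply: eq_bigr => i _; rewrite mulrC. Qed.

Lemma dotvDl u v w : dotv (u + v) w = dotv u w + dotv v w.
Proof. by rewrite /dotv -big_split; apply: eq_bigr => i _; rewrite !mxE mulrDl. Qed.

Lemma dotvNl u w : dotv (- u) w = - dotv u w.
Proof. by rewrite /dotv -sumrN; apply: eq_bigr => i _; rewrite !mxE mulNr. Qed.

Lemma dotvZl (a : R) u w : dotv (a *: u) w = a * dotv u w.
Proof. by rewrite /dotv mulr_sumr; apply: eq_bigr => i _; rewrite !mxE mulrA. Qed.

Lemma dotvBl u v w : dotv (u - v) w = dotv u w - dotv v w.
Proof. by rewrite dotvDl dotvNl. Qed.

Lemma dotvBr u v w : dotv w (u - v) = dotv w u - dotv w v.
Proof. by rewrite dotvC dotvBl !(dotvC w). Qed.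

Lemma dotvNr u w : dotv w (- u) = - dotv w u.
Proof. by rewrite dotvC dotvNl dotvC. Qed.

Lemma dotvZr (a : R) u w : dotv w (a *: u) = a * dotv w u.
Proof. by rewrite dotvC dotvZl dotvC. Qed.

Lemma dotvv_ge0 u : 0 <= dotv u u.
Proof. by apply: sumr_ge0 => i _; rewrite -expr2 sqr_ge0. Qed.

Lemma normv_ge0 u : 0 <= normv u.
Proof. exact: sqrtr_ge0. Qed.

Lemma normv2 u : normv u ^+ 2 = dotv u u.
Proof. by rewrite sqr_sqrtr // dotvv_ge0. Qed.

Lemma dotvv_gt0 u : u != 0 -> 0 < dotv u u.
Proof.
apply: contraNT; rewrite -leNgt => u_le0; apply/eqP/rowP => i; rewrite mxE.
have : dotv u u == 0 by rewrite eq_le u_le0 dotvv_ge0.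
rewrite psumr_eq0 => [/allP/(_ i (mem_index_enum _))|j _]; last first.
  by rewrite -expr2 sqr_ge0.
by rewrite -expr2 sqrf_eq0 => /eqP.
Qed.

Lemma normv_gt0 u : u != 0 -> 0 < normv u.
Proof. by move=> u0; rewrite sqrtr_gt0 dotvv_gt0. Qed.

Lemma normv_le u w : dotv u u <= dotv w w -> normv u <= normv w.
Proof. by move=> uw; rewrite ler_sqrt ?dotvv_ge0. Qed.

Lemma dotv_sqrB u w : dotv (w - u) (w - u) = dotv w w - 2 * dotv u w + dotv u u.
Proof. rewrite dotvBl !dotvBr (dotvC w u); lra. Qed.

Lemma three_point v w z :
  dotv (w - z) (w - z) = dotv (v - z) (v - z) - dotv (v - w) (v - w)
     + 2 * dotv (v - w) (z - w).
Proof.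
have -> : w - z = (v - z) - (v - w) by rewrite opprB [RHS]addrC addrA subrK.
have -> : z - w = (v - w) - (v - z) by rewrite opprB [RHS]addrC addrA subrK.
rewrite dotv_sqrB (dotvBr (v - w) (v - z) (v - w)); lra.
Qed.

(* The topology of ['rV_n] comes from the sup norm [`|_|]; we compare it with
   the Euclidean norm: [`|u| <= normv u <= sqrt n * `|u|]. *)
Lemma coord_le_normv u i : `|u ord0 i| <= normv u.
Proof.
rewrite -sqrtr_sqr ler_sqrt ?dotvv_ge0 // /dotv (bigD1 i) //= -expr2 lerDl.
by apply: sumr_ge0 => j _; rewrite -expr2 sqr_ge0.
Qed.

Lemma coord_le_supnorm u i : `|u ord0 i| <= `|u|.
Proof.
by rewrite [leRHS]/Num.norm /= mx_normrE; apply/bigmax_geP; right; exists (ord0, i).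
Qed.

Lemma supnorm_le_normv u : `|u| <= normv u.
Proof.
rewrite [leLHS]/Num.norm /= mx_normrE; apply/bigmax_leP; split=> [|[a i] _ /=].
  exact: normv_ge0.
by rewrite (ord1 a); exact: coord_le_normv.
Qed.

Lemma normv_le_supnorm u : normv u <= Num.sqrt n%:R * `|u|.
Proof.
have -> : Num.sqrt n%:R * `|u| = Num.sqrt (n%:R * `|u| ^+ 2).
  by rewrite sqrtrM ?ler0n // sqrtr_sqr ger0_norm.
rewrite ler_sqrt ?mulr_ge0 ?ler0n ?sqr_ge0 //.
rewrite /dotv (_ : _ * _ = \sum_(i < n) `|u| ^+ 2); last first.
  by rewrite sumr_const card_ord mulr_natl.
apply: ler_sum => i _; rewrite -expr2 -real_normK ?num_real //.
by rewrite lerXn2r ?nnegrE ?normr_ge0 // coord_le_supnorm.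
Qed.

End Euclid.

Section Convexity.
Variables (R : realType) (n : nat).
Local Notation V := 'rV[R]_n.
Variable f : V -> R.
Hypothesis fcvx : convex_funV f.

Lemma convex_le_endpoints (p q : V) (t B : R) : 0 <= t -> t <= 1 ->
  f p <= B -> f q <= B -> f (t *: p + (1 - t) *: q) <= B.
Proof.
move=> t0 t1 fp fq; apply: le_trans (fcvx p q t0 t1) _.
have : t * f p <= t * B by rewrite ler_wpM2l.
have : (1 - t) * f q <= (1 - t) * B by rewrite ler_wpM2l // subr_ge0.
lra.
Qed.

(* Local boundedness: a convex function on R^n is bounded above on every
   sup-norm ball, by the sum of (the absolute values of) its values at the 2^n
   vertices of the box.  By induction on [k], this bound holds on the points of
   the box whose coordinates of index [>= k] are extreme: a point with its
   coordinate [k] free lies on a segment between two such points. *)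
Lemma convex_bounded_on_ball (c : V) (M : R) : 0 < M ->
  exists B, forall v : V, `|v - c| <= M -> f v <= B.
Proof.
move=> M0.
pose vert (b : {ffun 'I_n -> bool}) : V := c + \row_i (if b i then M else - M).
pose B := \sum_(b : {ffun 'I_n -> bool}) `|f (vert b)|.
pose in_box (v : V) := forall i, `|v ord0 i - c ord0 i| <= M.
suff face_bound : forall k (v : V), in_box v ->
    (forall i : 'I_n, (k <= i)%N -> `|v ord0 i - c ord0 i| = M) -> f v <= B.
  exists B => v vM; apply: (face_bound n) => [i|i]; last by rewrite leqNgt ltn_ord.
  by apply: le_trans vM; have := coord_le_supnorm (v - c) i; rewrite !mxE.
elim=> [|k IH] v vbox vext.
  pose b := [ffun i => 0 < v ord0 i - c ord0 i].
  have -> : v = vert b.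
    apply/rowP => i; rewrite !mxE ffunE; have := vext i (leq0n _).
    case: ltrP => hd; first by rewrite gtr0_norm // => <-; rewrite addrC subrK.
    by rewrite ler0_norm // => <-; rewrite opprK addrC subrK.
  apply: le_trans (ler_norm _) _.
  by rewrite /B (bigD1 b) //= lerDl; apply: sumr_ge0 => *; exact: normr_ge0.
have [kn|nk] := ltnP k n; last first.
  by apply: IH => // i ki; have := leq_trans (ltn_ord i) nk; rewrite ltnNge ki.
pose i0 := Ordinal kn.
pose vs (a : R) : V := \row_j (if j == i0 then c ord0 j + a else v ord0 j).
have vs_bound : forall a, `|a| = M -> f (vs a) <= B.
  move=> a aM; apply: IH => [j|j kj]; rewrite mxE;
    case: eqP => [->|/eqP ji0]; rewrite ?[_ + a - _]addrC ?addKr ?aM //.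
  apply: vext; rewrite ltn_neqAle kj andbT; apply: contra ji0 => /eqP ek.
  by apply/eqP/val_inj; rewrite /= ek.
pose d := v ord0 i0 - c ord0 i0.
have [dl du] : - M <= d /\ d <= M by apply/andP; rewrite -ler_norml; exact: vbox.
pose t := (M - d) / (2 * M).
have t0 : 0 <= t by rewrite /t divr_ge0 // ?subr_ge0 // mulr_ge0 // ltW.
have t1 : t <= 1 by rewrite /t ler_pdivrMr ?mulr_gt0 //; lra.
have -> : v = t *: vs (- M) + (1 - t) *: vs M.
  apply/rowP => j; rewrite !mxE; case: eqP => [->|_]; last by lra.
  rewrite /t /d; field; lra.
by apply: convex_le_endpoints; rewrite // vs_bound // ?normrN gtr0_norm.
Qed.

(* This yields lower semicontinuity of [f]. *)
Lemma convex_ray_bound (x y : V) (la B : R) : 0 < la -> la <= 1 ->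
  f (x + la^-1 *: (y - x)) <= B -> f y <= la * B + (1 - la) * f x.
Proof.
move=> la0 la1 fzB.
have {1}-> : y = la *: (x + la^-1 *: (y - x)) + (1 - la) *: x.
  by apply/rowP => i; rewrite !mxE; field; rewrite gt_eqF.
apply: le_trans (fcvx _ _ (ltW la0) la1) _.
by rewrite lerD2r ler_wpM2l // ltW.
Qed.

End Convexity.

Section FejerStep.
Variables (R : realType) (n : nat).
Local Notation V := 'rV[R]_n.

Lemma lt_half (a : R) : a < 2^-1 -> 2 * a < 1.
Proof. by rewrite -(ltr_pM2l (_ : 0 < 2)) // mulfV. Qed.

Lemma inexact_proj_fejer (u v w z : V) (gam th lam nu phiv : R) :
  dotv (v - w) (z - w) <= phiv -> dotv (v - w) (u - w) <= phiv ->
  phiv <= gam * normv (v - u) ^+ 2 + th * normv (w - v) ^+ 2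
          + lam * normv (w - u) ^+ 2 ->
  th < 2^-1 -> 0 <= lam -> lam < 2^-1 ->
  1 + 2 * gam <= nu * (1 - 2 * lam) ->
  dotv (w - z) (w - z) <= dotv (v - z) (v - z) + (nu - 1) * dotv (v - u) (v - u).
Proof.
move=> phz phu phle th1 lam0 lam1 hnu.
have Zid := three_point v w z; have Pid := three_point v w u.
rewrite !normv2 -[w - v]opprB dotvNl dotvNr opprK in phle.
set A := dotv (v - u) (v - u) in phle Pid *.
set Q := dotv (v - w) (v - w) in phle Zid Pid.
set P := dotv (w - u) (w - u) in phle Pid.
set Z := dotv (w - z) (w - z) in Zid *.
set Vz := dotv (v - z) (v - z) in Zid *.
have [A0 Q0] : 0 <= A /\ 0 <= Q by split; exact: dotvv_ge0.
have thQ : 2 * (th * Q) <= Q.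
  by rewrite mulrA -[leRHS]mul1r ler_wpM2r // ltW // lt_half.
have l2 : 0 < 1 - 2 * lam by rewrite subr_gt0 lt_half.
have hP : (1 - 2 * lam) * P <= (1 + 2 * gam) * A by lra.
have hZ : Z - Vz <= 2 * gam * A + 2 * lam * P by lra.
suff : (1 - 2 * lam) * (Z - Vz) <= (1 - 2 * lam) * ((nu - 1) * A).
  by rewrite ler_pM2l //; lra.
have scaled_gap : (1 - 2 * lam) * (Z - Vz) <= (1 - 2 * lam) * (2 * gam * A + 2 * lam * P).
  by rewrite ler_wpM2l // ltW.
have scaled_P : (2 * lam) * ((1 - 2 * lam) * P) <= (2 * lam) * ((1 + 2 * gam) * A).
  by rewrite ler_wpM2l // mulr_ge0.
have nu_bound : (1 + 2 * gam) * A <= nu * (1 - 2 * lam) * A by rewrite ler_wpM2r.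
nra.
Qed.

(* Subgradient step with Polyak's stepsize [t = beta D / |s|^2], where
   [D = f u - fstar] and [s] is an [eps]-subgradient at [u] with [eps <= mu beta D]:
   for every minimizer [z], the step [u - t s] decreases the squared distance
   to [z] by [t D], even after paying the projection error [(nu - 1) |t s|^2],
   as long as [beta (2 mu + nu) <= 1]. *)
Lemma polyak_subgrad_step (f : V -> R) (fstar : R) (u z s : V)
    (t eps beta mu nu : R) :
  f z = fstar -> fstar <= f u -> eps_subdiff f eps u s -> s != 0 ->
  t = beta * (f u - fstar) / normv s ^+ 2 -> 0 <= beta -> 0 <= mu ->
  beta * (2 * mu + nu) <= 1 -> eps <= mu * beta * (f u - fstar) ->
  dotv (u - t *: s - z) (u - t *: s - z)
    + (nu - 1) * dotv (u - t *: s - u) (u - t *: s - u)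
  <= dotv (u - z) (u - z) - t * (f u - fstar).
Proof.
move=> fz fu sub s0 ht beta0 mu0 hbeta heps.
rewrite normv2 in ht; have s2 := dotvv_gt0 s0.
set D := f u - fstar in ht heps fu *.
have D0 : 0 <= D by rewrite /D subr_ge0.
have t0 : 0 <= t by rewrite ht divr_ge0 ?mulr_ge0 // ltW.
have tss : t ^+ 2 * dotv s s = t * (beta * D).
  by rewrite ht expr2 -mulrA divfK ?gt_eqF.
have -> : u - t *: s - u = - (t *: s) by rewrite addrAC subrr add0r.
rewrite dotvNl dotvNr opprK dotvZl dotvZr [t * (t * _)]mulrA -expr2 tss.
have -> : u - t *: s - z = (u - z) - t *: s by rewrite addrAC.
rewrite (dotv_sqrB (t *: s)) !dotvZl !dotvZr [t * (t * _)]mulrA -expr2 tss (dotvC s).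
have sub_z : D - eps <= dotv (u - z) s.
  have := sub z; rewrite fz -(opprB u z) dotvNr (dotvC s) /D; lra.
have : t * (D - eps) <= t * dotv (u - z) s by rewrite ler_wpM2l.
have : t * eps <= t * (mu * beta * D) by rewrite ler_wpM2l.
have : t * D * (beta * (2 * mu + nu)) <= t * D * 1 by rewrite ler_wpM2l ?mulr_ge0.
nra.
Qed.

End FejerStep.

Section RealSequences.
Variable R : realType.

Lemma decrease_sum_bound (a c : nat -> R) :
  (forall k, 0 <= a k) -> (forall k, a k.+1 <= a k - c k) ->
  forall K, \sum_(0 <= k < K) c k <= a 0%N.
Proof.
move=> a0 adec K; suff : \sum_(0 <= k < K) c k + a K <= a 0%N.
  by apply: le_trans; rewrite lerDl.
elim: K => [|K IH]; first by rewrite big_geq // add0r.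
by rewrite big_nat_recr //=; have := adec K; lra.
Qed.

Lemma bounded_series_cvg0 (c : nat -> R) (M : R) :
  (forall k, 0 <= c k) -> (forall K, \sum_(0 <= k < K) c k <= M) ->
  c @ \oo --> 0.
Proof.
move=> c0 cM; apply: cvg_series_cvg_0; apply: nondecreasing_is_cvgn.
  by apply: (@nondecreasing_series _ c xpredT 0) => *; exact: c0.
by exists M => _ [K _ <-]; exact: cM.
Qed.

Lemma sq_dominated_cvg (u c : nat -> R) (L b : R) : 0 <= b ->
  c @ \oo --> 0 -> (forall k, (u k - L) ^+ 2 <= b * c k) -> u @ \oo --> L.
Proof.
move=> b0 /cvgrPdist_lt c_cvg0 dom; apply/cvgrPdist_lt => e e0.
have b1 : 0 < b + 1 by lra.
apply: filterS (c_cvg0 (e ^+ 2 / (b + 1)) _); last by rewrite divr_gt0 ?exprn_gt0.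
move=> k; rewrite sub0r normrN ltr_pdivlMr // mulrC => ck.
rewrite -(@ltr_pXn2r _ 2) ?nnegrE ?normr_ge0 ?(ltW e0) // distrC -normrX.
rewrite ger0_norm ?sqr_ge0 //.
apply: le_lt_trans (dom k) _.
apply: le_lt_trans ck; apply: le_trans (ler_wpM2l b0 (ler_norm (c k))) _.
by rewrite ler_wpM2r ?normr_ge0 ?lerDl.
Qed.

End RealSequences.

Section FejerSequences.
Variables (R : realType) (n : nat).
Local Notation V := 'rV[R]_n.
Implicit Types (x : nat -> V) (z xb : V).

Lemma cluster_near x xb (P : nat -> Prop) (e : R) :
  cluster (x @ \oo) xb -> (\forall k \near \oo, P k) -> 0 < e ->
  exists k, P k /\ `|xb - x k| < e.
Proof.
move=> cl hP e0.
have [|y [[k Pk <-]]] := cl (x @` [set k | P k]) (ball xb e) _ (nbhsx_ballx _ _ e0).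
  by apply: filterS hP => k Pk; exists k.
by rewrite -ball_normE /=; exists k.
Qed.

Lemma fejer_mono x z : (forall k, normv (x k.+1 - z) <= normv (x k - z)) ->
  forall k m, (k <= m)%N -> normv (x m - z) <= normv (x k - z).
Proof.
by move=> fej k m km; exact: (nonincreasing_seqP (fun k => normv (x k - z))).1 fej k m km.
Qed.

Lemma fejer_bounded x z : (forall k, normv (x k.+1 - z) <= normv (x k - z)) ->
  forall k, `|x k - z| <= normv (x 0%N - z).
Proof.
move=> fej k; apply: le_trans (supnorm_le_normv _) _; exact: fejer_mono.
Qed.

Lemma fejer_cluster_cvg x xb :
  (forall k, normv (x k.+1 - xb) <= normv (x k - xb)) ->
  cluster (x @ \oo) xb -> x @ \oo --> xb.
Proof.
move=> fej cl; apply/cvgrPdist_lt => e e0.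
pose r : R := Num.sqrt n%:R + 1.
have r0 : 0 < r by rewrite /r ltr_pwDr ?sqrtr_ge0.
have [k0 [_ hk0]] := cluster_near (P := fun=> True) cl filterT (divr_gt0 e0 r0).
near=> k; rewrite distrC; apply: le_lt_trans (supnorm_le_normv _) _.
have k0k : (k0 <= k)%N by near: k; exact: nbhs_infty_ge.
apply: le_lt_trans (fejer_mono fej k0k) _.
apply: le_lt_trans (normv_le_supnorm _) _; rewrite distrC in hk0.
have : Num.sqrt n%:R * `|x k0 - xb| <= r * `|x k0 - xb|.
  by rewrite ler_wpM2r // lerDl.
move: hk0; rewrite ltr_pdivlMr // => hk0; nra.
Unshelve. all: by end_near.
Qed.

Lemma bounded_seq_cluster (C : set V) x (c : V) (r : R) :
  closed C -> (forall k, C (x k)) -> (forall k, `|x k - c| <= r) ->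
  exists2 xb, C xb & cluster (x @ \oo) xb.
Proof.
move=> Ccl Cx xr; pose A := C `&` closed_ball_ Num.norm c r.
have bA : bounded_set A.
  exists (`|c| + r); split; first exact: num_real.
  move=> M cM y [_ Ay]; rewrite /closed_ball_ /= in Ay; apply: ltW.
  apply: le_lt_trans cM; have -> : y = c - (c - y) by rewrite opprB addrC subrK.
  by apply: le_trans (ler_normB _ _) _; rewrite lerD2l.
have clA : closed A by apply: closedI => //; exact: closed_closed_ball_.
have xA : (x @ \oo) A.
  by exists 0%N => // k _; split => //; rewrite /closed_ball_ /= distrC.
have [xb [[Cxb _] clxb]] := bounded_closed_compact bA clA _ xA.
by exists xb.
Qed.

Lemma cluster_value_le (f : V -> R) x (c xb : V) (r B L : R) :
  convex_funV f -> (forall k, `|x k - c| <= r) ->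
  (forall v, `|v - c| <= r + 1 -> f v <= B) ->
  (fun k => f (x k)) @ \oo --> L -> cluster (x @ \oo) xb -> f xb <= L.
Proof.
move=> fcvx xr fB /cvgrPdist_lt fL cl; apply/ler_addgt0Pr => e e0.
have e1 : 0 < `|B - L| + e by rewrite ltr_wpDl.
pose la := e / (2 * (`|B - L| + e)).
have la0 : 0 < la by rewrite divr_gt0 ?mulr_gt0.
have laE : la * (2 * (`|B - L| + e)) = e by rewrite /la divfK // gt_eqF ?mulr_gt0.
have la1 : la <= 1.
  by rewrite /la ler_pdivrMr ?mulr_gt0 // mul1r; have := normr_ge0 (B - L); lra.
have [k [fk xk]] := cluster_near cl (fL (e / 2) (divr_gt0 e0 (ltr0Sn _ 1))) la0.
have zB : `|x k + la^-1 *: (xb - x k) - c| <= r + 1.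
  rewrite addrAC; apply: le_trans (ler_normD _ _) _; apply: lerD => //.
  rewrite normrZ gtr0_norm ?invr_gt0 // ler_pdivrMl // mulr1; exact: ltW.
have := convex_ray_bound fcvx la0 la1 (fB _ zB).
have := ler_wpM2l (ltW la0) (ler_norm (B - L)).
move: fk; rewrite ltr_norml => /andP[fk _].
have : (1 - la) * (f (x k) - L) <= (1 - la) * (e / 2).
  by rewrite ler_wpM2l ?subr_ge0 //; lra.
nra.
Qed.

Lemma fejer_gap_cvg (f : V -> R) (C : set V) (fstar : R) x (xm : V) :
  convex_funV f -> closed C -> (forall k, C (x k)) ->
  (forall z, C z -> fstar <= f z) -> C xm -> f xm = fstar ->
  (forall z, C z -> f z = fstar ->
     forall k, normv (x k.+1 - z) <= normv (x k - z)) ->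
  (fun k => f (x k)) @ \oo --> fstar ->
  exists xs, (C xs /\ f xs = fstar) /\ x @ \oo --> xs.
Proof.
move=> fcvx Ccl Cx fmin Cxm fxm fej fcvg.
have xr := fejer_bounded (fej xm Cxm fxm).
have [B fB] := convex_bounded_on_ball fcvx xm (ltr_wpDl (normv_ge0 (x 0%N - xm)) ltr01).
have [xb Cxb clxb] := bounded_seq_cluster Ccl Cx xr.
have fxb : f xb = fstar.
  by apply/eqP; rewrite eq_le (fmin _ Cxb) andbT; exact: (cluster_value_le fcvx xr fB fcvg clxb).
by exists xb; split => //; exact: fejer_cluster_cvg (fej xb Cxb fxb) clxb.
Qed.

End FejerSequences.

Section PolyakMethod.
Variables (R : realType) (n : nat).
Local Notation V := 'rV[R]_n.

(* [eps]-subgradients are bounded where [f] is bounded above: if [f <= B] on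
   the sup-ball of radius [r + 1] around [c] and [`|u - c| <= r], testing the
   [eps]-subgradient inequality at [u + s / |s|] gives [|s| <= B - f u + eps]. *)
Lemma eps_subdiff_normv_le (f : V -> R) (eps B r : R) (c u s : V) :
  s != 0 -> eps_subdiff f eps u s -> `|u - c| <= r ->
  (forall y, `|y - c| <= r + 1 -> f y <= B) -> normv s <= B - f u + eps.
Proof.
move=> s0 sub ur fB; have ns0 := normv_gt0 s0.
pose y := u + (normv s)^-1 *: s.
have yu : y - u = (normv s)^-1 *: s by rewrite /y addrC addKr.
have := sub y; rewrite yu dotvZr -normv2 expr2 mulrA mulVf ?gt_eqF // mul1r.
suff : f y <= B by lra.
apply: fB; have -> : y - c = (y - u) + (u - c) by rewrite addrA subrK.
rewrite addrC; apply: le_trans (ler_normD _ _) _; apply: lerD => //.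
rewrite yu normrZ gtr0_norm ?invr_gt0 // ler_pdivrMl //.
by rewrite mulr1 supnorm_le_normv.
Qed.

Lemma polyak_iteration_fejer (f : V -> R) (C : set V) (fstar : R)
    (phi : V -> V -> V -> R) (u w s z : V) (t eps beta mu nu gam th lam : R) :
  C u -> C z -> f z = fstar -> fstar <= f u ->
  rel_err_tol gam th lam phi -> inexP C phi u (u - t *: s) w ->
  eps_subdiff f eps u s -> s != 0 -> t = beta * (f u - fstar) / normv s ^+ 2 ->
  th < 2^-1 -> 0 <= lam -> lam < 2^-1 ->
  1 + 2 * gam <= nu * (1 - 2 * lam) ->
  0 <= beta -> 0 <= mu -> beta * (2 * mu + nu) <= 1 ->
  eps <= mu * beta * (f u - fstar) ->
  dotv (w - z) (w - z) <= dotv (u - z) (u - z) - t * (f u - fstar).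
Proof.
move=> Cu Cz fz fu tol [_ proj] sub s0 ht th1 lam0 lam1 hnu beta0 mu0 hbeta heps.
apply: le_trans (polyak_subgrad_step fz fu sub s0 ht beta0 mu0 hbeta heps).
exact: inexact_proj_fejer (proj z Cz) (proj u Cu) (tol _ _ _).2 th1 lam0 lam1 hnu.
Qed.

End PolyakMethod.

Lemma polyak_gap_sq (R : realType) (D t beta blow ns S : R) :
  0 < blow -> blow <= beta -> 0 < ns -> ns <= S ->
  t = beta * D / ns ^+ 2 -> D ^+ 2 <= S ^+ 2 / blow * (t * D).
Proof.
move=> blow0 hbeta ns0 nsS ->.
have ns2 : 0 < ns ^+ 2 by rewrite exprn_gt0.
have ratio : 1 <= S ^+ 2 * beta / (blow * ns ^+ 2).
  rewrite ler_pdivlMr ?mulr_gt0 // mul1r mulrC.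
  by apply: ler_pM; rewrite ?sqr_ge0 ?(ltW blow0) //; nra.
have -> : S ^+ 2 / blow * (beta * D / ns ^+ 2 * D)
        = S ^+ 2 * beta / (blow * ns ^+ 2) * D ^+ 2.
  by field; rewrite !gt_eqF.
by rewrite -[leLHS]mul1r ler_wpM2r ?sqr_ge0.
Qed.

Lemma polyak_admissible (R : realType) (gbar lbar mu bbar gam lam beta nu : R) :
  nu = (1 + 2 * gbar) / (1 - 2 * lbar) ->
  0 <= gbar -> lbar < 2^-1 -> gam <= gbar -> lam <= lbar -> 0 <= mu ->
  0 <= beta -> beta <= bbar -> bbar < 1 / (2 * mu + nu) ->
  1 + 2 * gam <= nu * (1 - 2 * lam) /\ beta * (2 * mu + nu) <= 1.
Proof.
move=> nuE gbar0 lbar1 gamb lamb mu0 beta0 betab hbbar.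
have l2 : 0 < 1 - 2 * lbar by rewrite subr_gt0 lt_half.
have nu0 : 0 < nu by rewrite nuE divr_gt0 //; lra.
have nul : nu * (1 - 2 * lbar) = 1 + 2 * gbar by rewrite nuE divfK ?gt_eqF.
split.
  have : nu * (1 - 2 * lbar) <= nu * (1 - 2 * lam).
    by apply: ler_wpM2l; [exact: ltW | lra].
  lra.
have K0 : 0 < 2 * mu + nu by lra.
move: hbbar; rewrite ltr_pdivlMr // => hbbar.
apply: ltW; apply: le_lt_trans hbbar; exact: ler_wpM2r (ltW K0) _ _ betab.
Qed.

Unset Implicit Arguments. Set Strict Implicit.

Theorem mainTheorem8 (R : realType) (n : nat)
  (f : 'rV[R]_n -> R) (C : set 'rV[R]_n) (fstar : R)
  (gbar thbar lbar mu blow bbar : R)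
  (gam th lam eps beta t : nat -> R)
  (phi : nat -> 'rV[R]_n -> 'rV[R]_n -> 'rV[R]_n -> R)
  (x s : nat -> 'rV[R]_n) :
  (* problem data *)
  convex_funV f -> C !=set0 -> closed C -> convex_setV C ->
  (* Omega^* nonempty and fstar = inf_C f *)
  (exists xm, C xm /\ f xm = fstar) ->
  (forall z, C z -> fstar <= f z) ->
  (* standing assumptions on the tolerance parameters *)
  0 <= gbar -> 0 <= thbar < 2^-1 -> 0 <= lbar < 2^-1 ->
  (forall k, 0 <= gam k < gbar) ->
  (forall k, 0 <= th k < thbar) ->
  (forall k, 0 <= lam k < lbar) ->
  (forall k, rel_err_tol (gam k) (th k) (lam k) (phi k)) ->
  (* the method; the sequence is infinite *)
  C (x 0%N) ->
  (forall k, ~ (eps_subdiff f 0 (x k) 0)) ->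
  (forall k, s k != 0 /\ eps_subdiff f (eps k) (x k) (s k)) ->
  (forall k, inexP C (phi k) (x k) (x k - t k *: s k) (x k.+1)) ->
  (* Polyak's stepsize rule *)
  0 <= mu -> 0 < blow -> 0 < bbar ->
  (forall k, eps k.+1 <= eps k) ->
  (forall k, blow <= beta k <= bbar) ->
  bbar < 1 / (2 * mu + (1 + 2 * gbar) / (1 - 2 * lbar)) ->
  (forall k, 0 < eps k <= mu * beta k * (f (x k) - fstar)) ->
  (forall k, t k = beta k * (f (x k) - fstar) / normv (s k) ^+ 2) ->
  exists xs : 'rV[R]_n, (C xs /\ f xs = fstar) /\ x @ \oo --> xs.
Proof.
move=> fcvx _ Ccl _ [xm [Cxm fxm]] fmin gbar0 /andP[_ thbar1] /andP[_ lbar1]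
  hgam hth hlam htol Cx0 _ hs hproj mu0 blow0 _ eps_dec hbeta hbbar heps ht.
have Cx : forall k, C (x k) by elim=> // k _; case: (hproj k).
have fge : forall k, fstar <= f (x k) by move=> k; exact: fmin.
have beta0 : forall k, 0 <= beta k.
  by move=> k; have /andP[+ _] := hbeta k; apply/le_trans/ltW.
have fejer : forall z, C z -> f z = fstar -> forall k,
    dotv (x k.+1 - z) (x k.+1 - z) <= dotv (x k - z) (x k - z) - t k * (f (x k) - fstar).
  move=> z Cz fz k; have [s0 sub] := hs k; have /andP[_ hepsk] := heps k.
  have /andP[_ gamb] := hgam k; have /andP[_ thb] := hth k.
  have /andP[lam0 lamb] := hlam k; have /andP[_ betab] := hbeta k.
  have [hnu hb] := polyak_admissible (erefl _) gbar0 lbar1 (ltW gamb) (ltW lamb)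
    mu0 (beta0 k) betab hbbar.
  exact: polyak_iteration_fejer (Cx k) Cz fz (fge k) (htol k) (hproj k) sub s0 (ht k)
    (lt_trans thb thbar1) lam0 (lt_trans lamb lbar1) hnu (beta0 k) mu0 hb hepsk.
have gap0 : forall k, 0 <= t k * (f (x k) - fstar).
  by move=> k; rewrite ht !mulr_ge0 ?invr_ge0 ?sqr_ge0 ?subr_ge0.
have fej_norm : forall z, C z -> f z = fstar ->
    forall k, normv (x k.+1 - z) <= normv (x k - z).
  by move=> z Cz fz k; apply: normv_le; have := fejer z Cz fz k; have := gap0 k; lra.
have xr := fejer_bounded (fej_norm xm Cxm fxm).
have [B fB] := convex_bounded_on_ball fcvx xm (ltr_wpDl (normv_ge0 (x 0%N - xm)) ltr01).
have s_bd : forall k, normv (s k) <= B - fstar + eps 0%N.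
  move=> k; have [s0 sub] := hs k.
  have eps_k := (nonincreasing_seqP eps).1 eps_dec 0%N k (leq0n k).
  apply: le_trans (eps_subdiff_normv_le s0 sub (xr k) fB) _.
  by have := fge k; lra.
have gap_sq k : (f (x k) - fstar) ^+ 2
    <= (B - fstar + eps 0%N) ^+ 2 / blow * (t k * (f (x k) - fstar)).
  have [s0 _] := hs k; have /andP[blow_beta _] := hbeta k.
  exact: polyak_gap_sq blow0 blow_beta (normv_gt0 s0) (s_bd k) (ht k).
have sum_bd := decrease_sum_bound (fun k => dotvv_ge0 (x k - xm)) (fejer xm Cxm fxm).
have fcvg := sq_dominated_cvg (divr_ge0 (sqr_ge0 _) (ltW blow0))
  (bounded_series_cvg0 gap0 sum_bd) gap_sq.
exact: fejer_gap_cvg fcvx Ccl Cx fmin Cxm fxm fej_norm fcvg.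
Qed.
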